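(* Let $G$ be a reaction network whose stoichiometric subspace is one-dimensional. If $cap_{pos}(G)<+\infty$, then $cap_{nondeg}(G)=cap_{pos}(G)$.
   Context: A reaction network $G$ has species $X_1,\dots,X_s$ and $m$ reactions $\sum_{i}\alpha_{ij}X_i\to\sum_i\beta_{ij}X_i$, with $\alpha_{ij},\beta_{ij}\in\mathbb Z_{\ge0}$ and $(\alpha_{1j},\dots,\alpha_{sj})\neq(\beta_{1j},\dots,\beta_{sj})$. The stoichiometric matrix $\mathcal N$ has entries $\beta_{ij}-\alpha_{ij}$; its image $S$ is the stoichiometric subspace. For $\kappa\in\mathbb R^m_{>0}$, mass-action kinetics gives $\dot x=f(\kappa;x)=\mathcal N(\kappa_1\prod_i x_i^{\alpha_{i1}},\dots,\kappa_m\prod_i x_i^{\alpha_{im}})^\top$. Stoichiometric compatibility classes are the sets $(x^0+S)\cap\mathbb R^s_{\ge0}$. A steady state is $x\in\mathbb R^s_{\ge0}$ with $f(\kappa;x)=0$; positive if $x\in\mathbb R^s_{>0}$; nondegenerate if $\mathrm{Jac}_f(x)(S)=S$. $cap_{pos}(G)$ (resp. $cap_{nondeg}(G)$) is the maximal $N\in\mathbb Z_{\ge0}\cup\{+\infty\}$ such that for some $\kappa$ and some compatibility class, $G$ has $N$ positive (resp. nondegenerate positive) steady states in that class. *)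

From HB Require Import structures.
From mathcomp Require Import all_boot all_order all_algebra.
From mathcomp Require Import all_classical all_reals all_analysis.
Set Implicit Arguments. Unset Strict Implicit. Unset Printing Implicit Defensive.
Import Order.TTheory GRing.Theory Num.Theory.
Import numFieldNormedType.Exports.
Local Open Scope ring_scope.

Section RN.
Variables (R : realType) (s m : nat).
(* A reaction network with species X_1..X_s (indices 'I_s) and m reactions
   (indices 'I_m): reaction j is  sum_i alpha i j X_i -> sum_i beta i j X_i. *)
Variables (alpha beta : 'M[nat]_(s, m)).

Definition stoich : 'M[R]_(s, m) :=
  \matrix_(i, j) ((beta i j)%:R - (alpha i j)%:R).

(* Vectors in R^s are row vectors 'rV[R]_s; the stoichiometric subspace
   S = im N is the row space of N^T (mxalgebra). *)
Definition in_stoich_subspace (v : 'rV[R]_s) : bool := (v <= stoich^T)%MS.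

(* mass-action vector field f(kappa; x) = N (kappa_j prod_i x_i^alpha_ij)_j,
   written for row vectors: f^T = v^T N^T *)
Definition massaction (kappa : 'rV[R]_m) (x : 'rV[R]_s) : 'rV[R]_s :=
  (\row_j (kappa 0 j * \prod_i (x 0 i) ^+ (alpha i j))) *m stoich^T.

Definition jac (f : 'rV[R]_s -> 'rV[R]_s) (x : 'rV[R]_s) : 'M[R]_s :=
  \matrix_(i, k) ('D_(delta_mx 0 k) f x) 0 i.

Definition nonneg_vec (x : 'rV[R]_s) : Prop := forall i, 0 <= x 0 i.
Definition pos_vec (x : 'rV[R]_s) : Prop := forall i, 0 < x 0 i.

Definition compat_class (x0 : 'rV[R]_s) : set 'rV[R]_s :=
  [set x | in_stoich_subspace (x - x0) /\ nonneg_vec x].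

Definition steady_state (kappa : 'rV[R]_m) (x : 'rV[R]_s) : Prop :=
  nonneg_vec x /\ massaction kappa x = 0.

(* nondegenerate: Jac_f(x)(S) = S  (image of S under the Jacobian) *)
Definition nondegenerate (kappa : 'rV[R]_m) (x : 'rV[R]_s) : Prop :=
  (stoich^T *m (jac (massaction kappa) x)^T == stoich^T)%MS.

Definition pos_ss (kappa : 'rV[R]_m) (x0 : 'rV[R]_s) : set 'rV[R]_s :=
  [set x | compat_class x0 x /\ steady_state kappa x /\ pos_vec x].

Definition nondeg_pos_ss (kappa : 'rV[R]_m) (x0 : 'rV[R]_s) : set 'rV[R]_s :=
  [set x | pos_ss kappa x0 x /\ nondegenerate kappa x].

Definition pos_rates (kappa : 'rV[R]_m) : Prop := forall j, 0 < kappa 0 j.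

End RN.

Definition has_card (T : eqType) (A : set T) (n : nat) : Prop :=
  exists l : seq T, [/\ uniq l, size l = n & forall x, A x <-> x \in l].

(* cap_is Cnt n  <->  the capacity (max over admissible kappa and classes x0
   of the number of elements of Cnt kappa x0, in Z>=0 ∪ {+oo}) equals the
   finite value n: the value n is attained, and every such set is finite
   with at most n elements. *)
Definition cap_is (R : realType) (s m : nat)
  (Cnt : 'rV[R]_m -> 'rV[R]_s -> set 'rV[R]_s) (n : nat) : Prop :=
  (exists kappa x0, pos_rates kappa /\ has_card (Cnt kappa x0) n) /\
  (forall kappa x0, pos_rates kappa ->
     exists2 k, (k <= n)%N & has_card (Cnt kappa x0) k).

From Pilot Require Import Defs.
From HB Require Import structures.
From mathcomp Require Import all_boot all_order all_algebra.
From mathcomp Require Import all_classical all_reals all_analysis.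
From mathcomp Require Import polyrcf ring lra zify.
Set Implicit Arguments. Unset Strict Implicit. Unset Printing Implicit Defensive.
Import Order.TTheory GRing.Theory Num.Theory.
Import numFieldNormedType.Exports.
Local Open Scope ring_scope.
Local Open Scope classical_set_scope.

(* With S = span v, the positive steady states in the class of x0 are the points
   x0 + t v with t in the open set [pos_line x0] and t a root of the polynomial
   H = [rate_poly kappa x0], the coordinate of the vector field along v; such a steady
   state is nondegenerate as soon as t is a simple root.  Let (kappa, x0) realise
   cap_pos = n, with roots t_1, ..., t_n.  Decreasing kappa_j0 by c, where v is the
   reaction vector of reaction j0, turns H into H - c Q with Q > 0 the monomial of
   reaction j0.  Pick r > 0 such that H does not vanish at the 2n points t_i +- r; for
   one sign of c, H has that sign at at least n of them, and for |c| small each of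
   these yields a root of H - c Q between it and its t_i.  So H - c Q has at least,
   hence exactly, n roots.  The Wronskian H'Q - HQ' is nonzero (otherwise H/Q would be
   constant, so H = 0), and a double root z of H - c Q is a root of the Wronskian with
   c = H(z)/Q(z): avoiding these finitely many values of c, all n roots are simple. *)

Lemma has_card_sub (T : eqType) (A B : set T) (k : nat) :
  has_card A k -> B `<=` A -> exists2 k', (k' <= k)%N & has_card B k'.
Proof.
move=> [l [ul sl lA]] BA; exists (count (fun x => `[< B x >]) l).
  by rewrite -sl count_size.
exists [seq x <- l | `[< B x >]]; split; [exact: filter_uniq | by rewrite size_filter |].
move=> x; rewrite mem_filter; split => [Bx|/andP[/asboolP Bx _]] //.
by rewrite asboolT //=; apply/lA/BA.
Qed.

Lemma sub_in_count (T : eqType) (a1 a2 : pred T) (s : seq T) :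
  (forall x, x \in s -> a1 x -> a2 x) -> (count a1 s <= count a2 s)%N.
Proof.
elim: s => //= x s IHs s12; apply: leq_add.
  by case: (boolP (a1 x)) => // /(s12 x (mem_head x s)) ->.
by apply: IHs => y ys; apply: s12; rewrite in_cons ys orbT.
Qed.

Lemma mxrank_neq0_entry (F : fieldType) (p q : nat) (A : 'M[F]_(p, q)) :
  \rank A != 0%N -> exists i j, A i j != 0.
Proof.
rewrite mxrank_eq0 => /eqP A_neq0; apply: contrapT => no_entry; apply: A_neq0.
apply/matrixP => i j; rewrite mxE; apply: contrapT => Aij.
by apply: no_entry; exists i, j; exact/eqP.
Qed.

Definition wronskian (R : nzRingType) (p q : {poly R}) : {poly R} :=
  p^`() * q - p * q^`().

Lemma wronskian_eq0_root (R : numDomainType) (p q : {poly R}) (a : R) :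
  ~~ root q a -> root p a -> wronskian p q = 0 -> p = 0.
Proof.
move=> qa pa W0; apply/eqP/negPn/negP => p0.
have [[|k] [r /implyP/(_ p0) ra def_p]] := multiplicity_XsubC p a.
  by move: pa; rewrite def_p expr0 mulr1 (negbTE ra).
(* With p = r (X - a)^(k+1), W(p, q) = (X - a)^k ((k+1) r q + (X - a)(r' q - r q')),
   and the second factor does not vanish at a. *)
have Xa_neq0 : ('X - a%:P) ^+ k != 0 by rewrite expf_neq0 ?polyXsubC_eq0.
have W1 : ((r^`() * ('X - a%:P) + r *+ k.+1) * q - r * ('X - a%:P) * q^`()) = 0.
  apply: (mulIf Xa_neq0); rewrite mul0r -W0 /wronskian def_p derivM deriv_exp derivXsubC /=.
  by rewrite !exprS; ring.
move: (congr1 (horner^~ a) W1); rewrite !hornerE subrr !(mulr0, mul0r, add0r, subr0).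
move/eqP; rewrite hornerMn -mulr_natr -mulrA mulrC !mulf_eq0 pnatr_eq0 /=.
by move: ra qa; rewrite !rootE => /negbTE-> /negbTE->.
Qed.

Lemma filter_forall_mem (T : Type) (I : eqType) (F : set_system T) {FF : Filter F}
    (l : seq I) (P : I -> T -> Prop) :
  (forall i, i \in l -> \forall x \near F, P i x) ->
  \forall x \near F, forall i, i \in l -> P i x.
Proof.
elim: l => [|i l IHl] Pl; first exact: nearW.
have Pl' j : j \in l -> \forall x \near F, P j x.
  by move=> jl; apply: Pl; rewrite in_cons jl orbT.
apply: filterS2 (Pl i (mem_head i l)) (IHl Pl') => x Pi Plx j.
by rewrite in_cons => /predU1P[->|/Plx].
Qed.

Section RealPolynomials.
Variable R : realType.

Lemma nbhs_right_notin (x : R) (l : seq R) : \forall c \near x^'+, c \notin l.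
Proof.
have : \forall c \near x^'+, forall y, y \in l -> c != y.
  apply: filter_forall_mem => y _; have [yx|xy] := leP y x.
    by apply: filterS (nbhs_right_gt x) => c xc; rewrite gt_eqF // (le_lt_trans yx xc).
  by apply: filterS (nbhs_right_lt xy) => c cy; rewrite lt_eqF.
by apply: filterS => c cl; apply/negP => /cl; rewrite eqxx.
Qed.

Lemma open_near0_closed_ball (I : set R) (t : R) : open I -> I t ->
  \forall r \near 0^'+, forall u, `|u - t| <= r -> I u.
Proof.
move=> oI It; have /nbhs_ballP[e e0 teI] : nbhs t I by exact: open_nbhs_nbhs.
apply: filterS (nbhs_right_lt e0) => r re u ut; apply: teI.
by rewrite -ball_normE /= distrC; exact: le_lt_trans ut re.
Qed.

Lemma separating_radius (I : set R) (ts : seq R) :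
  open I -> (forall t, t \in ts -> I t) ->
  exists2 r : R, 0 < r & (forall t u, t \in ts -> `|u - t| <= r -> I u) /\
    (forall t t', t \in ts -> t' \in ts -> `|t - t'| < r *+ 2 -> t = t').
Proof.
move=> oI tsI.
have sep (t t' : R) : \forall r \near 0^'+, `|t - t'| < r *+ 2 -> t = t'.
  have [->|tt'] := eqVneq t t'; first exact: nearW.
  have d0 : 0 < `|t - t'| / 2 by rewrite divr_gt0 ?normr_gt0 ?subr_eq0.
  apply: filterS (nbhs_right_lt d0) => r rd; rewrite ltr_pdivlMr // in rd.
  by rewrite -mulr_natr => /(lt_trans rd); rewrite ltxx.
have rI : \forall r \near 0^'+, forall t, t \in ts -> forall u, `|u - t| <= r -> I u.
  exact: filter_forall_mem (fun t tts => open_near0_closed_ball oI (tsI t tts)).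
have rsep : \forall r \near 0^'+,
    forall t, t \in ts -> forall t', t' \in ts -> `|t - t'| < r *+ 2 -> t = t'.
  by apply: filter_forall_mem => t _; apply: filter_forall_mem => t' _; exact: sep.
have [r [r0 [{}rI {}rsep]]] := filter_ex (filterI (nbhs_right_gt (0 : R)) (filterI rI rsep)).
by exists r => //; split => [t u /rI|t t' /rsep/[apply]]; apply.
Qed.

Lemma degenerate_perturbations_finite (H Q : {poly R}) : wronskian H Q != 0 ->
  exists l : seq R, forall c z, Q.[z] != 0 -> root (H - c *: Q) z ->
    root (H - c *: Q)^`() z -> c \in l.
Proof.
move=> W0; exists [seq H.[z] / Q.[z] | z <- rootsR (wronskian H Q)] => c z Qz.
rewrite derivB derivZ !rootE !hornerE !subr_eq0 => /eqP Hz /eqP H'z.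
apply/mapP; exists z; last by rewrite Hz mulfK.
rewrite -(roots_on_rootsR W0) in_itv /= rootE /wronskian !hornerE Hz H'z.
by apply/eqP; ring.
Qed.

Lemma perturbation_sign_change (H Q : {poly R}) (c t p : R) :
  root H t -> 0 < Q.[t] -> 0 < Q.[p] -> 0 < c * H.[p] -> `|c| * Q.[p] < `|H.[p]| ->
  (H - c *: Q).[t] * (H - c *: Q).[p] < 0.
Proof.
move=> /eqP Ht Qt Qp cH cQH; rewrite !hornerE Ht sub0r.
have c0 : 0 < `|c| by rewrite normr_gt0; apply: contraTneq cH => ->; rewrite mul0r ltxx.
have : `|c| * (`|c| * Q.[p]) < `|c| * `|H.[p]| by rewrite ltr_pM2l.
rewrite -normrM gtr0_norm // mulrA -expr2 real_normK ?num_real // => key.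
have : 0 < Q.[t] * (c * H.[p] - c ^+ 2 * Q.[p]) by rewrite mulr_gt0 // subr_gt0.
nra.
Qed.

Definition side_point (r t : R) (b : bool) : R := if b then t + r else t - r.

Definition sides (ts : seq R) : seq (R * bool) :=
  [seq (t, b) | t <- ts, b <- [:: true; false]].

Lemma mem_sides (ts : seq R) t b : ((t, b) \in sides ts) = (t \in ts).
Proof.
apply/allpairsP/idP => [[[t' b'] [/= t'ts _ [-> _]]] //|tts].
by exists (t, b); case: b.
Qed.

Lemma side_point_dist (r t : R) (b : bool) : 0 <= r -> `|side_point r t b - t| = r.
Proof. by case: b => r0; rewrite /side_point addrAC subrr add0r ?normrN ger0_norm. Qed.

Lemma size_sides (ts : seq R) : size (sides ts) = (size ts).*2.
Proof. by rewrite size_allpairs muln2. Qed.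

Definition changes_sign (F : {poly R}) (r : R) (tb : R * bool) : bool :=
  F.[tb.1] * F.[side_point r tb.1 tb.2] < 0.

Lemma roots_near_sign_changes (F : {poly R}) (ts : seq R) (r : R) :
  0 < r -> uniq ts ->
  (forall t t', t \in ts -> t' \in ts -> `|t - t'| < r *+ 2 -> t = t') ->
  exists us : seq R, [/\ uniq us, size us = count (changes_sign F r) (sides ts) &
    forall u, u \in us -> root F u /\ exists2 t, t \in ts & `|u - t| < r].
Proof.
move=> r0 uts sep; pose good := changes_sign F r.
pose between (tb : R * bool) u :=
  if tb.2 then tb.1 < u < tb.1 + r else tb.1 - r < u < tb.1.
have [f fP] : {f : R * bool -> R & forall tb,
    tb.1 \in ts -> good tb -> root F (f tb) && between tb (f tb)}.
  apply: (@choice _ _ (fun tb u => tb.1 \in ts -> good tb -> root F u && between tb u)).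
  move=> [t b]; have [/andP[tts gtb]|nb] := boolP ((t \in ts) && good (t, b)); last first.
    by exists 0 => tts gtb; rewrite tts gtb in nb.
  move: gtb; rewrite /good /changes_sign /side_point /between /=.
  case: b => Fs.
    have [|u ut uF] := poly_ivtoo _ Fs; first by rewrite lerDl ltW.
    by exists u => _ _; rewrite uF; move: ut; rewrite in_itv.
  rewrite mulrC in Fs; have [|u ut uF] := poly_ivtoo _ Fs; first by rewrite gerBl ltW.
  by exists u => _ _; rewrite uF; move: ut; rewrite in_itv.
have near_center t b : t \in ts -> good (t, b) -> `|f (t, b) - t| < r.
  move=> tts gtb; have /andP[_] := fP (t, b) tts gtb; rewrite /between /=.
  by rewrite ltr_norml; case: b {gtb} => /andP[? ?]; apply/andP; split; lra.
exists [seq f tb | tb <- sides ts & good tb]; split.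
- rewrite map_inj_in_uniq ?filter_uniq ?allpairs_uniq //.
    by move=> [? ?] [? ?] _ _ [-> ->].
  move=> [t b] [t' b']; rewrite !mem_filter !mem_sides => /andP[gtb tts] /andP[gtb' tts'] ff'.
  have tt' : t = t'.
    apply: sep => //; have := near_center t b tts gtb; have := near_center t' b' tts' gtb'.
    by rewrite ff' !ltr_norml => /andP[? ?] /andP[? ?]; apply/andP; split; lra.
  subst t'; congr (_, _).
  have /andP[_] := fP (t, b) tts gtb; have /andP[_] := fP (t, b') tts' gtb'.
  by rewrite /between ff'; case: b b' {gtb gtb' ff'} => [] [] //= /andP[? ?] /andP[? ?]; lra.
- by rewrite size_map size_filter.
- move=> u /mapP[[t b]]; rewrite mem_filter mem_sides => /andP[gtb tts] ->.
  have /andP[uF _] := fP (t, b) tts gtb.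
  by split => //; exists t => //; exact: near_center.
Qed.

Lemma sign_majority (l : seq R) : (forall x, x \in l -> x != 0) ->
  exists2 e : R, `|e| = 1 & (size l <= (count (fun x => (0 < e * x)%R) l).*2)%N.
Proof.
move=> l_neq0; pose pos e := fun x : R => 0 < e * x.
have count_pos : (count (pos 1%R) l + count (pos (-1)%R) l)%N = size l.
  rewrite -(count_predC (pos 1)); congr (_ + _)%N; apply: eq_in_count => x xl.
  by have := l_neq0 x xl; rewrite /pos /= mulN1r mul1r oppr_gt0; case: ltgtP.
have [le_half|lt_half] := leqP (size l) (count (pos 1) l).*2.
  by exists 1; rewrite ?normr1.
exists (-1); rewrite ?normrN ?normr1 //.
by change (size l <= (count (pos (-1)%R) l).*2)%N; lia.
Qed.


Lemma perturbation_changes_signs (H Q : {poly R}) (ts bad : seq R) (r K : R) :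
  0 < K -> (forall t, t \in ts -> root H t /\ 0 < Q.[t]) ->
  (forall t b, t \in ts -> 0 < Q.[side_point r t b] /\ ~~ root H (side_point r t b)) ->
  exists c, [/\ `|c| < K, c \notin bad &
    (size ts <= count (changes_sign (H - c *: Q) r) (sides ts))%N].
Proof.
move=> K0 tsP sideP.
pose vals := [seq H.[side_point r tb.1 tb.2] | tb <- sides ts].
have [e e1 majority] :
    exists2 e : R, `|e| = 1 & (size vals <= (count (fun x => (0 < e * x)%R) vals).*2)%N.
  by apply: sign_majority => x /mapP[[t b]]; rewrite mem_sides => /(sideP t b)[_ ?] ->.
have e_neq0 : e != 0 by rewrite -normr_eq0 e1 oner_eq0.
have side_small tb : tb \in sides ts -> \forall c' \near 0^'+,
    c' * Q.[side_point r tb.1 tb.2] < `|H.[side_point r tb.1 tb.2]|.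
  case: tb => t b; rewrite mem_sides => /(sideP t b)[Qp Hp].
  have HQp : 0 < `|H.[side_point r t b]| / Q.[side_point r t b].
    by rewrite divr_gt0 // normr_gt0.
  by apply: filterS (nbhs_right_lt HQp) => c'; rewrite ltr_pdivlMr.
have [c' [c'0 [c'K [c'bad c'side]]]] := filter_ex (filterI (nbhs_right_gt (0 : R))
  (filterI (nbhs_right_lt K0) (filterI (nbhs_right_notin 0 [seq x / e | x <- bad])
  (filter_forall_mem side_small)))).
have normc : `|e * c'| = c' by rewrite normrM e1 mul1r gtr0_norm.
exists (e * c'); split; first by rewrite normc.
  by apply: contra c'bad => cbad; apply/mapP; exists (e * c'); rewrite // mulrAC mulfV ?mul1r.
move: majority; rewrite size_map size_sides count_map leq_double => /leq_trans; apply.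
apply: sub_in_count => -[t b]; rewrite mem_sides => tts /= He.
have [Ht Qt] := tsP t tts; have [Qp _] := sideP t b tts.
rewrite /changes_sign /=; apply: perturbation_sign_change => //.
  by rewrite -mulrA mulrCA mulr_gt0.
by rewrite normc; apply: (c'side (t, b)); rewrite mem_sides.
Qed.

Lemma perturb_to_nondegenerate_roots (I : set R) (H Q : {poly R}) (ts : seq R) (K : R) :
  open I -> (forall t, I t -> 0 < Q.[t]) -> uniq ts ->
  (forall t, t \in ts -> I t /\ root H t) -> (forall t, I t -> root H t -> t \in ts) ->
  0 < K ->
  exists c, [/\ `|c| < K,
    exists2 us : seq R, uniq us & (size ts <= size us)%N /\
      forall u, u \in us -> I u /\ root (H - c *: Q) u
  & forall t, I t -> root (H - c *: Q) t -> ~~ root (H - c *: Q)^`() t].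
Proof.
move=> oI Qpos uts tsH Hts K0.
case: ts uts tsH Hts => [|t1 ts'] uts tsH Hts.
  exists 0; split; [by rewrite normr0 | by exists [::] |].
  by move=> t It; rewrite scale0r subr0 => /(Hts t It).
set ts := t1 :: ts' in uts tsH Hts *; have t1ts : t1 \in ts := mem_head t1 ts'.
have [r r0 [rI rsep]] := separating_radius oI (fun t tts => (tsH t tts).1).
have sideI t b : t \in ts -> I (side_point r t b).
  by move=> tts; apply: (rI t) => //; rewrite (@side_point_dist r t b (ltW r0)).
have side_noroot t b : t \in ts -> ~~ root H (side_point r t b).
  move=> tts; apply/negP => /(Hts _ (sideI t b tts)) sts.
  have dist : `|side_point r t b - t| = r := @side_point_dist r t b (ltW r0).
  have tE : t = side_point r t b by apply: rsep; rewrite // distrC dist mulr2n ltrDl.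
  by move: dist; rewrite -tE subrr normr0 => r_eq0; rewrite r_eq0 ltxx in r0.
have W_neq0 : wronskian H Q != 0.
  apply: contraNneq (side_noroot t1 true t1ts) => W0; suff -> : H = 0 by rewrite root0.
  apply: (wronskian_eq0_root _ (tsH t1 t1ts).2 W0).
  by rewrite rootE gt_eqF // Qpos //; exact: (tsH t1 t1ts).1.
have [bad badP] := degenerate_perturbations_finite W_neq0.
have [c [cK cbad changes]] := perturbation_changes_signs (r := r) bad K0
  (fun t tts => conj (tsH t tts).2 (Qpos t (tsH t tts).1))
  (fun t b tts => conj (Qpos _ (sideI t b tts)) (side_noroot t b tts)).
have [us [uus size_us usP]] := roots_near_sign_changes (H - c *: Q) r0 uts rsep.
exists c; split => //.
  exists us => //; split; first by rewrite size_us.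
  by move=> u /usP[uF [t tts ut]]; split => //; apply: (rI t) => //; exact: ltW.
move=> t It Ft; apply/negP => dFt; move/negP: cbad; apply.
by apply: badP Ft dFt; rewrite gt_eqF // Qpos.
Qed.

End RealPolynomials.

Lemma differentiable_prod (R : realType) (V : normedModType R) (I : Type) (r : seq I)
    (F : I -> V -> R) (x : V) :
  (forall i, differentiable (F i) x) -> differentiable (fun y => \prod_(i <- r) F i y) x.
Proof.
move=> dF; elim: r => [|i r IHr].
  rewrite (_ : (fun y => _) = cst 1); last by apply/funext => y; rewrite big_nil.
  exact: differentiable_cst.
rewrite (_ : (fun y => _) = F i * (fun y => \prod_(j <- r) F j y)).
  exact: differentiableM.
by apply/funext => y; rewrite big_cons.
Qed.

Section OneDimensionalNetwork.
Variables (R : realType) (s m : nat) (alpha beta : 'M[nat]_(s, m)).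
Local Notation N := (stoich R alpha beta).
Local Notation f := (massaction alpha beta).
Variables (j0 : 'I_m) (k0 : 'I_s).
Local Notation v := (row j0 N^T).
Hypothesis v_k0 : v 0 k0 != 0.
Hypothesis rankN : \rank N = 1%N.

Lemma v_neq0 : v != 0.
Proof. by apply: contraNneq v_k0 => ->; rewrite mxE. Qed.

Lemma stoichT_eqmx : (N^T :=: v)%MS.
Proof.
apply/eqmx_sym/eqmxP; have [_ <-] := mxrank_leqif_eq (row_sub j0 N^T).
by rewrite mxrank_tr rankN rank_rV v_neq0.
Qed.

Lemma in_stoich_subspaceP w : in_stoich_subspace alpha beta w <-> exists t, w = t *: v.
Proof.
rewrite /in_stoich_subspace stoichT_eqmx; split; first by move/sub_rVP.
by move=> [t ->]; rewrite scalemx_sub.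
Qed.

Definition reaction_coef (j : 'I_m) : R := row j N^T 0 k0 / v 0 k0.

Lemma row_stoichT j : row j N^T = reaction_coef j *: v.
Proof.
have /sub_rVP[a def_row] : (row j N^T <= v)%MS by rewrite -stoichT_eqmx row_sub.
by rewrite /reaction_coef def_row [(a *: v) 0 k0]mxE mulfK.
Qed.

Lemma reaction_coef_j0 : reaction_coef j0 = 1.
Proof. exact: divff. Qed.

Definition rate_along (kappa : 'rV[R]_m) (x : 'rV[R]_s) : R :=
  \sum_j (kappa 0 j * \prod_i x 0 i ^+ alpha i j) * reaction_coef j.

Lemma massactionE kappa x : f kappa x = rate_along kappa x *: v.
Proof.
rewrite /massaction mulmx_sum_row /rate_along scaler_suml; apply: eq_bigr => j _.
by rewrite mxE [row j _]row_stoichT scalerA.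
Qed.

Definition monomial_poly (x0 : 'rV[R]_s) (j : 'I_m) : {poly R} :=
  \prod_i ((x0 0 i)%:P + (v 0 i)%:P * 'X) ^+ alpha i j.

Definition rate_poly (kappa : 'rV[R]_m) (x0 : 'rV[R]_s) : {poly R} :=
  \sum_j (kappa 0 j * reaction_coef j) *: monomial_poly x0 j.

Lemma horner_rate_poly kappa x0 t : (rate_poly kappa x0).[t] = rate_along kappa (x0 + t *: v).
Proof.
rewrite /rate_poly /rate_along horner_sum; apply: eq_bigr => j _.
rewrite hornerZ /monomial_poly horner_prod mulrAC; congr (_ * _ * _).
by apply: eq_bigr => i _; rewrite horner_exp !hornerE !mxE mulrC.
Qed.

Definition pos_line (x0 : 'rV[R]_s) : set R := [set t | forall i, 0 < x0 0 i + t * v 0 i].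

Lemma open_pos_line x0 : open (pos_line x0).
Proof.
rewrite openE => t xt; suff : \forall u \near t, forall i, 0 < x0 0 i + u * v 0 i by [].
apply: (@filter_forall _ _ (fun i u => 0 < x0 0 i + u * v 0 i) (nbhs t) _) => i.
have : open ((cst (x0 0 i) + *%R^~ (v 0 i)) @^-1` [set y | y > 0]).
  apply: open_comp (@open_gt _ 0) => u _.
  by apply: cvgD; [exact: cvg_cst | exact: mulrr_continuous].
by move=> oA; apply: open_nbhs_nbhs; split => //; exact: xt i.
Qed.

Lemma pos_ssP (kappa : 'rV[R]_m) (x0 x : 'rV[R]_s) : pos_ss alpha beta kappa x0 x <->
  exists2 t, x = x0 + t *: v & pos_line x0 t /\ root (rate_poly kappa x0) t.
Proof.
split.
- move=> [[/in_stoich_subspaceP[t xx0] _] [[_ fx0] xpos]].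
  have def_x : x = x0 + t *: v by rewrite -xx0 addrC subrK.
  exists t => //; split; first by move=> i; have := xpos i; rewrite def_x !mxE.
  move: fx0; rewrite massactionE => /eqP; rewrite scaler_eq0 (negbTE v_neq0) orbF.
  by rewrite rootE horner_rate_poly -def_x.
- move=> [t -> [xt /eqP rt]].
  have xpos : pos_vec (x0 + t *: v) by move=> i; have := xt i; rewrite !mxE.
  split; first split.
  + by apply/in_stoich_subspaceP; exists t; rewrite addrAC subrr add0r.
  + by move=> i; exact: ltW (xpos i).
  split => //; split; first by move=> i; exact: ltW (xpos i).
  by rewrite massactionE -horner_rate_poly rt scale0r.
Qed.

Lemma differentiable_massaction (kappa : 'rV[R]_m) (x : 'rV[R]_s) : differentiable (f kappa) x.
Proof.
have -> : f kappa =
    \sum_j (fun y : 'rV[R]_s => (kappa 0 j * \prod_i y 0 i ^+ alpha i j) *: row j N^T).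
  apply/funext => y; rewrite fct_sumE /massaction mulmx_sum_row /=.
  by apply: eq_bigr => j _; rewrite mxE.
apply: differentiable_sum => j; apply: differentiableZl; apply: differentiableM => //.
apply: differentiable_prod => i.
case: (alpha i j) => [|n].
  rewrite (_ : (fun y => _) = cst 1); last by apply/funext => y; rewrite expr0.
  exact: differentiable_cst.
rewrite (_ : (fun y => _) = (fun y : 'rV[R]_s => y 0 i) ^+ n.+1); last by rewrite exprfctE.
exact/differentiableX/differentiable_coord.
Qed.

Lemma trmx_jac_massaction (kappa : 'rV[R]_m) (x : 'rV[R]_s) :
  (jac (f kappa) x)^T = jacobian (f kappa) x.
Proof.
by apply/matrixP => k i; rewrite !mxE deriveE //; exact: differentiable_massaction.
Qed.

Lemma derive_massaction_line (kappa : 'rV[R]_m) (x0 : 'rV[R]_s) (t : R) :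
  'D_v (f kappa) (x0 + t *: v) = (rate_poly kappa x0)^`().[t] *: v.
Proof.
pose g u := (rate_poly kappa x0).[u] *: v.
have quotE : (fun h : R => h^-1 *: (f kappa (h *: v + (x0 + t *: v)) - f kappa (x0 + t *: v)))
    = (fun h : R => h^-1 *: (g (h *: 1 + t) - g t)).
  apply/funext => h; rewrite /g !massactionE !horner_rate_poly.
  by congr (_ *: (_ *: v - _)); congr rate_along; rewrite scalerDl addrCA [h *: 1]mulr1.
have -> : 'D_v (f kappa) (x0 + t *: v) = 'D_1 g t by rewrite /derive quotE.
have dp : differentiable (horner (rate_poly kappa x0)) t.
  exact/derivable1_diffP/derivable_horner.
rewrite deriveE; last exact: differentiableZl.
by rewrite diffZl //; congr (_ *: _); rewrite -deriveE // -derive1E -derivE.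
Qed.

Lemma nondegenerate_line (kappa : 'rV[R]_m) (x0 : 'rV[R]_s) (t : R) :
  ~~ root (rate_poly kappa x0)^`() t -> Defs.nondegenerate alpha beta kappa (x0 + t *: v).
Proof.
move=> dp_neq0; rewrite /Defs.nondegenerate trmx_jac_massaction.
apply/eqmxP/(eqmx_trans (eqmxMr _ stoichT_eqmx)).
rewrite -deriveEjacobian; last exact: differentiable_massaction.
rewrite derive_massaction_line.
exact: eqmx_trans (eqmx_scale _ dp_neq0) (eqmx_sym stoichT_eqmx).
Qed.

Lemma monomial_poly_gt0 (x0 : 'rV[R]_s) j t : pos_line x0 t -> 0 < (monomial_poly x0 j).[t].
Proof.
move=> xt; rewrite /monomial_poly horner_prod; apply: prodr_gt0 => i _.
by rewrite horner_exp !hornerE exprn_gt0 // mulrC; exact: xt i.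
Qed.

Definition line_coord (x0 x : 'rV[R]_s) : R := (x - x0) 0 k0 / v 0 k0.

Lemma line_coordK x0 t : line_coord x0 (x0 + t *: v) = t.
Proof. by rewrite /line_coord addrAC subrr add0r [(t *: v) 0 k0]mxE mulfK. Qed.

Lemma line_inj (x0 : 'rV[R]_s) : injective (fun t : R => x0 + t *: v).
Proof. exact: can_inj (@line_coordK x0). Qed.

Lemma rate_poly_shift (kappa : 'rV[R]_m) (x0 : 'rV[R]_s) (c : R) :
  rate_poly (kappa - c *: delta_mx 0 j0) x0 = rate_poly kappa x0 - c *: monomial_poly x0 j0.
Proof.
rewrite /rate_poly (bigD1 j0) // [X in _ = X - _](bigD1 j0) //=.
rewrite (eq_bigr (fun j => (kappa 0 j * reaction_coef j) *: monomial_poly x0 j)); last first.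
  by move=> j /negbTE j_neq0; rewrite !mxE j_neq0 andbF mulr0 subr0.
by rewrite !mxE /= eqxx mulr1 reaction_coef_j0 !mulr1 scalerBl addrAC.
Qed.

Lemma nondeg_pos_ss_attained (n : nat) :
  cap_is (@pos_ss R s m alpha beta) n ->
  exists (kappa : 'rV[R]_m) (x0 : 'rV[R]_s),
    pos_rates kappa /\ has_card (nondeg_pos_ss alpha beta kappa x0) n.
Proof.
move=> [[kappa [x0 [kpos [l [ul sl lP]]]]] cap_le].
have l_line x : x \in l ->
    exists2 t, x = x0 + t *: v & pos_line x0 t /\ root (rate_poly kappa x0) t.
  by move=> /lP /pos_ssP.
pose ts := [seq line_coord x0 x | x <- l].
have uts : uniq ts.
  rewrite map_inj_in_uniq // => x y /l_line[tx -> _] /l_line[ty -> _].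
  by rewrite !line_coordK => ->.
have tsP t : t \in ts -> pos_line x0 t /\ root (rate_poly kappa x0) t.
  by move=> /mapP[x /l_line[tx -> txP] ->]; rewrite line_coordK.
have rootsP t : pos_line x0 t -> root (rate_poly kappa x0) t -> t \in ts.
  move=> xt rt; apply/mapP; exists (x0 + t *: v); last by rewrite line_coordK.
  by apply/lP/pos_ssP; exists t.
have [c [cK [us uus [size_us usP]] nondeg]] := perturb_to_nondegenerate_roots
  (@open_pos_line x0) (@monomial_poly_gt0 x0 j0) uts tsP rootsP (kpos j0).
pose kappa' := kappa - c *: delta_mx 0 j0.
have kpos' : pos_rates kappa'.
  move=> j; rewrite !mxE; have [->|_] := eqVneq j j0; last by rewrite mulr0 subr0.
  by rewrite mulr1 subr_gt0 (le_lt_trans (ler_norm c)).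
have [k kn [L [uL sL LP]]] := cap_le kappa' x0 kpos'.
have pos_ss' t : pos_ss alpha beta kappa' x0 (x0 + t *: v) <->
    pos_line x0 t /\ root (rate_poly kappa x0 - c *: monomial_poly x0 j0) t.
  rewrite -rate_poly_shift; split => [/pos_ssP[t' /line_inj ->]|] //.
  by move=> tP; apply/pos_ssP; exists t.
have nk : (n <= k)%N.
  rewrite -sl -sL -(size_map (line_coord x0)) (leq_trans size_us) //.
  rewrite -(size_map (fun u => x0 + u *: v)); apply: uniq_leq_size.
    by rewrite map_inj_uniq //; exact: line_inj.
  by move=> _ /mapP[u /usP uP ->]; apply/LP/pos_ss'.
exists kappa', x0; split => //; exists L; split => // [|x].
  by apply/eqP; rewrite sL eqn_leq kn nk.
split => [[/LP //]|xL]; have x_ss := (LP x).2 xL; split => //.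
have [t -> [xt rt]] := (pos_ssP _ _ _).1 x_ss.
apply: nondegenerate_line; rewrite rate_poly_shift.
by apply: nondeg xt _; rewrite -rate_poly_shift.
Qed.

End OneDimensionalNetwork.

Theorem theorem6p1 (R : realType) (s m : nat) (alpha beta : 'M[nat]_(s, m))
  (Hreac : forall j : 'I_m, col j alpha != col j beta)
  (Hdim1 : \rank (stoich R alpha beta) = 1%N)
  (n : nat) (Hcap : cap_is (@pos_ss R s m alpha beta) n) :
  cap_is (@nondeg_pos_ss R s m alpha beta) n.
Proof.
have [_ pos_le] := Hcap; split; last first.
  move=> kappa x0 kpos; have [k kn card_k] := pos_le kappa x0 kpos.
  have nondeg_sub : nondeg_pos_ss alpha beta kappa x0 `<=` pos_ss alpha beta kappa x0.
    by move=> x [].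
  have [k' k'k card_k'] := has_card_sub card_k nondeg_sub.
  by exists k' => //; exact: leq_trans kn.
have [k0 [j0 N_k0j0]] : exists k0 j0, stoich R alpha beta k0 j0 != 0.
  by apply: mxrank_neq0_entry; rewrite Hdim1.
have v_k0 : row j0 (stoich R alpha beta)^T 0 k0 != 0.
  by move: N_k0j0; rewrite !mxE.
exact: (nondeg_pos_ss_attained v_k0 Hdim1 Hcap).
Qed.
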